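(* Let $L\in\mathbb{R}^{N\times N}$ be invertible, $C=LL^T$, and let $D$ be the diagonal matrix with $D_{ii}=\sqrt{C_{ii}}$. Let $D_{opt}$ be an invertible diagonal matrix minimizing $\kappa(G^{-1}L)$ over all invertible diagonal matrices $G$. Then $$\kappa(D^{-1}L)\le\sqrt{N}\,\kappa(D_{opt}^{-1}L).$$ Furthermore, if at most $K$ entries in each row of $LL^T$ are nonzero, then $$\kappa(D^{-1}L)\le\sqrt{K}\,\kappa(D_{opt}^{-1}L).$$
   Context: For an invertible matrix $B\in\mathbb{R}^{N\times N}$, $\kappa(B):=\|B\|_2\,\|B^{-1}\|_{S^4}$, where $\|\cdot\|_2$ is the spectral norm and $\|A\|_{S^4}:=\left(\sum_{n} s_n^4\right)^{1/4}$ with $s_n$ the singular values of $A$ (fourth Schatten norm). *)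

From HB Require Import structures.
From mathcomp Require Import all_boot all_order all_algebra.
From mathcomp Require Import reals.
From Stdlib Require Import ClassicalEpsilon.
Set Implicit Arguments. Unset Strict Implicit. Unset Printing Implicit Defensive.
Import Order.TTheory GRing.Theory Num.Theory.
Local Open Scope ring_scope.

Section Defs.
Variable R : realType.

(* s is a (multiset) list of the singular values of A: the nonnegative
   square roots of the eigenvalues (with multiplicity) of A^T A. *)
Definition is_singular_values (N : nat) (A : 'M[R]_N) (s : 'I_N -> R) : Prop :=
  (forall i, 0 <= s i) /\
  char_poly (A^T *m A) = \prod_(i < N) ('X - ((s i) ^+ 2)%:P).

(* a choice of the singular values (they exist since A^T A is symmetric psd) *)
Definition singvals (N : nat) (A : 'M[R]_N) : 'I_N -> R :=
  epsilon (inhabits (fun _ : 'I_N => 0)) (is_singular_values A).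

Definition spec_norm (N : nat) (A : 'M[R]_N) : R :=
  \big[Num.max/0]_(i < N) singvals A i.

Definition schatten4 (N : nat) (A : 'M[R]_N) : R :=
  Num.sqrt (Num.sqrt (\sum_(i < N) (singvals A i) ^+ 4)).

Definition kappa (N : nat) (B : 'M[R]_N) : R :=
  spec_norm B * schatten4 (invmx B).

Definition inv_diag (N : nat) (G : 'M[R]_N) : Prop :=
  exists d : 'rV[R]_N, G = diag_mx d /\ forall i, d 0 i != 0.

End Defs.

From HB Require Import structures.
From mathcomp Require Import all_boot all_order all_algebra.
From mathcomp Require Import reals complex ring lra.
From Stdlib Require Import ClassicalEpsilon.
Import Order.TTheory GRing.Theory Num.Theory.
Local Open Scope ring_scope.
Set Implicit Arguments. Unset Strict Implicit. Unset Printing Implicit Defensive.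

(* Let B := D^-1 L and, for an arbitrary invertible diagonal G, A := G^-1 L.
   Then B^-1 = A^-1 diag(d_i / g_i), and |d_i / g_i| is the Euclidean norm of
   row i of A, hence at most ||A||_2.  Right multiplication by a diagonal
   matrix with entries bounded by c multiplies the S^4 norm by at most c, so
   ||B^-1||_S4 <= ||A||_2 ||A^-1||_S4, i.e. kappa(B) <= ||B||_2 kappa(A).  Finally the rows of B have
   unit length, so ||B||_2^2 <= tr(B B^T) = N, and Gershgorin's theorem for
   B B^T, whose entries are bounded by 1 and whose sparsity pattern is that of
   L L^T, gives ||B||_2^2 <= K. *)

Section Similarity.
Variables (F : fieldType) (n : nat) (P X : 'M[F]_n).
Hypothesis P_unit : P \in unitmx.

Lemma char_poly_similar : char_poly (invmx P *m X *m P) = char_poly X.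
Proof.
rewrite /char_poly /char_poly_mx.
have PVP : map_mx polyC (invmx P) *m map_mx polyC P = 1%:M.
  by rewrite -map_mxM mulVmx // map_mx1.
have -> : 'X%:M - map_mx polyC (invmx P *m X *m P) =
    map_mx polyC (invmx P) *m ('X%:M - map_mx polyC X) *m map_mx polyC P.
  rewrite !map_mxM mulmxBr mulmxBl; congr (_ - _).
  by rewrite mul_mx_scalar -scalemxAl PVP scalemx1.
rewrite !det_mulmx mulrC mulrA -det_mulmx.
by rewrite -map_mxM mulmxV // map_mx1 det1 mul1r.
Qed.

Lemma mxtrace_similar : \tr (invmx P *m X *m P) = \tr X.
Proof. by rewrite mxtrace_mulC mulmxA mulmxV // mul1mx. Qed.

Lemma similar_diag_mul (d e : 'rV[F]_n) :
  (invmx P *m diag_mx d *m P) *m (invmx P *m diag_mx e *m P) =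
  invmx P *m diag_mx (\row_j (d 0 j * e 0 j)) *m P.
Proof. by rewrite !mulmxA mulmxK // -(mulmxA (invmx P)) mulmx_diag. Qed.

End Similarity.

Lemma char_poly_diag (F : comNzRingType) n (e : 'rV[F]_n) :
  char_poly (diag_mx e) = \prod_j ('X - (e 0 j)%:P).
Proof.
rewrite char_poly_trig ?diag_mx_is_trig //.
by apply: eq_bigr => j _; rewrite mxE eqxx mulr1n.
Qed.

Section GramSpectrum.
Variable R : realType.
Local Notation cR := (real_complex R).
Local Notation mc := (map_mx cR).
Local Open Scope sesquilinear_scope.

Lemma map_conj_real m k (B : 'M[R]_(m, k)) : map_mx Num.conj (mc B) = mc B.
Proof. by apply/matrixP => i j; rewrite !mxE; exact: conjc_real. Qed.

Lemma map_trmxC_real m k (B : 'M[R]_(m, k)) : (mc B)^t* = mc B^T.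
Proof. by rewrite map_trmx map_conj_real. Qed.

Variables (n : nat) (A : 'M[R]_n).
Local Notation M := (A^T *m A).

(* MathComp's spectral theorem lives over a numClosedField, so A^T A is
   diagonalised over R[i]; its eigenvalues are real since it is symmetric. *)
Definition gram_basis : 'M[R[i]]_n := spectralmx (mc M).
Definition gram_eigvals : 'rV[R]_n :=
  map_mx (@complex.Re R) (spectral_diag (mc M)).
Local Notation P := gram_basis.
Local Notation lam := gram_eigvals.

Lemma gram_basis_unitary : P \is unitarymx.
Proof. exact: spectral_unitarymx. Qed.

Lemma gram_basis_unit : P \in unitmx.
Proof. exact: spectral_unit. Qed.

Lemma gram_spectral_decomp : mc M = invmx P *m diag_mx (mc lam) *m P.
Proof.
have M_herm : mc M \is hermsymmx.
  apply: realsym_hermsym.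
    apply/is_hermitianmxP; rewrite expr0 scale1r map_mx_id //.
    by rewrite map_trmx trmx_mul trmxK.
  apply/mxOverP => i j; rewrite mxE realE -(rmorph0 cR) !lecR; exact: le_total.
have -> : mc lam = spectral_diag (mc M).
  apply/matrixP => i j; rewrite !mxE RRe_real //.
  by move/mxOverP: (hermitian_spectral_diag_real M_herm); apply.
by apply/orthomx_spectralP; apply: hermitian_normalmx.
Qed.

Lemma gram_quadE (x : 'rV[R[i]]_n) :
  (x *m mc M *m x^t*) 0 0 = \sum_j cR (lam 0 j) * `|(x *m P^t*) 0 j| ^+ 2.
Proof.
rewrite gram_spectral_decomp invmx_unitary ?gram_basis_unitary // !mulmxA.
have -> : x *m P^t* *m diag_mx (mc lam) *m P *m x^t* =
    (x *m P^t*) *m diag_mx (mc lam) *m (x *m P^t*)^t*.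
  by rewrite -!mulmxA; congr (_ *m (_ *m _)); rewrite trmx_mul map_mxM trmxCK.
rewrite mxE; apply: eq_bigr => j _.
by rewrite mul_mx_diag !mxE normCK mulrA [_ * cR _]mulrC.
Qed.

Lemma gram_quad_ge0 (x : 'rV[R[i]]_n) : 0 <= (x *m mc M *m x^t*) 0 0.
Proof.
set z := x *m (mc A)^T.
have -> : x *m mc M *m x^t* = z *m z^t*.
  by rewrite /z trmx_mul trmxK !map_mxM map_conj_real map_trmx !mulmxA.
by rewrite mxE; apply: sumr_ge0 => k _; rewrite !mxE mul_conjC_ge0.
Qed.

Lemma gram_eigvals_ge0 j : 0 <= lam 0 j.
Proof.
(* [row j P *m P^t*] is the j-th unit vector. *)
have := gram_quad_ge0 (row j P).
rewrite gram_quadE -row_mul (unitarymxP gram_basis_unitary) (bigD1 j) //= big1 ?addr0.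
  by rewrite !mxE eqxx normr1 expr1n mulr1 -(rmorph0 cR) lecR.
by move=> k kj; rewrite !mxE eq_sym (negbTE kj) normr0 expr0n mulr0.
Qed.

Lemma char_poly_gram : char_poly M = \prod_j ('X - (lam 0 j)%:P).
Proof.
apply: (@map_poly_inj _ _ cR); rewrite map_char_poly gram_spectral_decomp.
rewrite char_poly_similar ?gram_basis_unit // char_poly_diag rmorph_prod.
by apply: eq_bigr => j _; rewrite mxE /= map_polyXsubC.
Qed.

Lemma mxtrace_gram : \tr M = \sum_j lam 0 j.
Proof.
apply: complexI; rewrite -trace_map_mx gram_spectral_decomp.
rewrite mxtrace_similar ?gram_basis_unit // mxtrace_diag rmorph_sum.
by apply: eq_bigr => j _; rewrite mxE.
Qed.

Lemma mxtrace_gram_sqr : \tr (M *m M) = \sum_j lam 0 j ^+ 2.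
Proof.
apply: complexI; rewrite -trace_map_mx map_mxM gram_spectral_decomp.
rewrite similar_diag_mul ?gram_basis_unit // mxtrace_similar ?gram_basis_unit //.
rewrite mxtrace_diag rmorph_sum.
by apply: eq_bigr => j _; rewrite !mxE rmorphXn.
Qed.

Lemma gram_rayleigh (v : 'rV[R]_n) (c : R) : (forall j, lam 0 j <= c) ->
  (v *m M *m v^T) 0 0 <= c * (v *m v^T) 0 0.
Proof.
move=> lam_le; rewrite -lecR rmorphM /=.
have -> : cR ((v *m M *m v^T) 0 0) = (mc v *m mc M *m (mc v)^t*) 0 0.
  by rewrite map_trmxC_real -!map_mxM [RHS]mxE.
have -> : cR ((v *m v^T) 0 0) = \sum_j `|(mc v *m P^t*) 0 j| ^+ 2.
  have PtP : P^t* *m P = 1%:M.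
    by rewrite -invmx_unitary ?gram_basis_unitary // mulVmx ?gram_basis_unit.
  transitivity ((mc v *m P^t* *m (mc v *m P^t*)^t*) 0 0).
    rewrite trmx_mul map_mxM trmxCK !mulmxA -(mulmxA (mc v)) PtP mulmx1.
    by rewrite map_trmxC_real -map_mxM [RHS]mxE.
  by rewrite mxE; apply: eq_bigr => j _; rewrite !mxE normCK.
rewrite gram_quadE mulr_sumr; apply: ler_sum => j _.
by apply: ler_wpM2r; [exact/exprn_ge0/normr_ge0 | rewrite lecR].
Qed.

End GramSpectrum.

Section SingularValues.
Variables (R : realType) (n : nat) (A : 'M[R]_n).
Local Notation s := (singvals A).
Local Notation lam := (gram_eigvals A).

Lemma singvals_spec : is_singular_values A s.
Proof.
rewrite /singvals; apply: epsilon_spec.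
exists (fun j => Num.sqrt (lam 0 j)); split => [j|]; first exact: sqrtr_ge0.
rewrite char_poly_gram; apply: eq_bigr => j _.
by rewrite sqr_sqrtr ?gram_eigvals_ge0.
Qed.

Lemma singvals_ge0 i : 0 <= s i.
Proof. by case: singvals_spec. Qed.

Lemma perm_singvals_sqr :
  perm_eq [seq s i ^+ 2 | i <- enum 'I_n] [seq lam 0 j | j <- enum 'I_n].
Proof.
case: singvals_spec => _ char_s; apply: prod_XsubC_eq.
by rewrite !big_map -char_poly_gram char_s.
Qed.

Lemma sum_singvals_sqr_map (f : R -> R) :
  \sum_i f (s i ^+ 2) = \sum_j f (lam 0 j).
Proof.
transitivity (\sum_(x <- [seq s i ^+ 2 | i <- enum 'I_n]) f x).
  by rewrite big_map big_enum.
by rewrite (perm_big _ perm_singvals_sqr) big_map big_enum.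
Qed.

Lemma sum_singvals_sqr : \sum_i s i ^+ 2 = \tr (A^T *m A).
Proof. by rewrite mxtrace_gram (sum_singvals_sqr_map id). Qed.

Lemma sum_singvals_pow4 : \sum_i s i ^+ 4 = \tr ((A^T *m A) *m (A^T *m A)).
Proof.
rewrite mxtrace_gram_sqr -(sum_singvals_sqr_map (fun x => x ^+ 2)).
by apply: eq_bigr => i _; rewrite -exprM.
Qed.

Lemma singvals_sqr_eigenvalue i : eigenvalue (A^T *m A) (s i ^+ 2).
Proof.
rewrite eigenvalue_root_char; case: singvals_spec => _ ->.
rewrite -big_enum -(big_map (fun j => s j ^+ 2) xpredT (fun a => 'X - a%:P)).
by rewrite root_prod_XsubC (map_f (fun j => s j ^+ 2)) ?mem_enum.
Qed.

Lemma spec_norm_ge0 : 0 <= spec_norm A.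
Proof. exact: bigmax_ge_id. Qed.

Lemma singvals_le_spec_norm i : s i <= spec_norm A.
Proof. exact: le_bigmax. Qed.

Lemma spec_norm_le_sqrt (x : R) : (forall i, s i ^+ 2 <= x) ->
  spec_norm A <= Num.sqrt x.
Proof.
move=> s_le; apply: bigmax_le => [|i _]; first exact: sqrtr_ge0.
rewrite -(ger0_norm (singvals_ge0 i)) -sqrtr_sqr ler_sqrt //.
exact: le_trans (sqr_ge0 _) (s_le i).
Qed.

Lemma gram_rayleigh_spec_norm (v : 'rV[R]_n) :
  (v *m (A^T *m A) *m v^T) 0 0 <= spec_norm A ^+ 2 * (v *m v^T) 0 0.
Proof.
apply: gram_rayleigh => j.
have : lam 0 j \in [seq s i ^+ 2 | i <- enum 'I_n].
  by rewrite (perm_mem perm_singvals_sqr) map_f ?mem_enum.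
case/mapP => i _ ->.
by rewrite lerXn2r ?nnegrE ?singvals_ge0 ?spec_norm_ge0 ?singvals_le_spec_norm.
Qed.

End SingularValues.

Lemma kappa_ge0 (R : realType) n (A : 'M[R]_n) : 0 <= kappa A.
Proof. by rewrite mulr_ge0 ?spec_norm_ge0 ?sqrtr_ge0. Qed.

Lemma eigenvalue_mulC (F : fieldType) n (A B : 'M[F]_n) (a : F) :
  a != 0 -> eigenvalue (A *m B) a -> eigenvalue (B *m A) a.
Proof.
move=> a_neq0 /eigenvalueP[v vAB v_neq0]; apply/eigenvalueP.
exists (v *m A); first by rewrite mulmxA -(mulmxA v) vAB -scalemxAl.
apply: contraNneq v_neq0 => vA0.
have : a *: v == 0 by rewrite -vAB mulmxA vA0 mul0mx.
by rewrite scalemx_eq0 (negbTE a_neq0).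
Qed.

(* Gershgorin's bound, read at a coordinate of maximal modulus of a left
   eigenvector. *)
Lemma eigenvalue_norm_le (R : realFieldType) n (M : 'M[R]_n) (a c : R) (K : nat) :
  eigenvalue M a -> (forall i j, `|M i j| <= c) ->
  (forall j, (#|[set i | M i j != 0%R]| <= K)%N) -> `|a| <= K%:R * c.
Proof.
move=> /eigenvalueP[v vM v_neq0] M_le supp_le.
have [i0 _] : exists i0 : 'I_n, true.
  case: (pickP (fun _ : 'I_n => true)) => [i0|no_index]; first by exists i0.
  by case/negP: v_neq0; apply/eqP/rowP => j; have := no_index j.
have c_ge0 : 0 <= c := le_trans (normr_ge0 _) (M_le i0 i0).
case: (@arg_maxP _ _ _ i0 xpredT (fun j => `|v 0 j|) isT) => j0 _ v_le.
have v_gt0 : 0 < `|v 0 j0|.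
  rewrite normr_gt0; apply: contraNneq v_neq0 => vj0; apply/eqP/rowP => j.
  by have := v_le j isT; rewrite /= vj0 normr0 normr_le0 mxE => /eqP.
have eigen_j0 : a * v 0 j0 = \sum_i v 0 i * M i j0.
  by have /rowP/(_ j0) := vM; rewrite !mxE => <-.
rewrite -(ler_pM2r v_gt0) -normrM eigen_j0.
apply: le_trans (ler_norm_sum _ _ _) _.
apply: (@le_trans _ _ (\sum_(i in [set i | M i j0 != 0]) c * `|v 0 j0|)).
  rewrite [leRHS]big_mkcond /=; apply: ler_sum => i _; rewrite inE normrM.
  case: eqP => [->|_]; first by rewrite normr0 mulr0.
  by rewrite /= mulrC ler_pM ?normr_ge0 ?M_le //; apply: v_le.
rewrite sumr_const -[leLHS]mulr_natl mulrA.
by apply: ler_wpM2r; rewrite ?normr_ge0 //; apply: ler_wpM2r; rewrite ?ler_nat.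
Qed.

Section GramBounds.
Variables (R : realType) (n : nat).
Implicit Types (A X : 'M[R]_n).

Lemma gram_sym A i j : (A *m A^T) i j = (A *m A^T) j i.
Proof. by rewrite -{1}[A *m A^T]trmxK trmx_mul trmxK mxE. Qed.

Lemma gram_diag_ge0 A i : 0 <= (A *m A^T) i i.
Proof. by rewrite mxE; apply: sumr_ge0 => k _; rewrite mxE -expr2 sqr_ge0. Qed.

Lemma gram_diag_le_spec_norm A i : (A *m A^T) i i <= spec_norm A ^+ 2.
Proof.
set r := (A *m A^T) i i.
have row_r : (row i A *m (row i A)^T) 0 0 = r.
  by rewrite /r !mxE; apply: eq_bigr => k _; rewrite !mxE.
have r_sqr_le : r ^+ 2 <= (row i A *m (A^T *m A) *m (row i A)^T) 0 0.
  set w := row i A *m A^T.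
  have -> : row i A *m (A^T *m A) *m (row i A)^T = w *m w^T.
    by rewrite /w !mulmxA trmx_mul trmxK mulmxA.
  have wi : w 0 i = r by rewrite /w -row_mul mxE.
  rewrite mxE (bigD1 i) //= -wi !mxE expr2 lerDl.
  by apply: sumr_ge0 => k _; rewrite [w^T k 0]mxE -expr2 sqr_ge0.
have := le_trans r_sqr_le (gram_rayleigh_spec_norm A (row i A)).
rewrite row_r; have [->|r_neq0] := eqVneq r 0; first by rewrite exprn_ge0 ?spec_norm_ge0.
by rewrite expr2 ler_pM2r // lt_def r_neq0 gram_diag_ge0.
Qed.

Lemma gram_entry_norm_le A i j :
  2 * `|(A *m A^T) i j| <= (A *m A^T) i i + (A *m A^T) j j.
Proof.
have sumsq_ge0 (e : R) : 0 <= \sum_k (A i k + e * A j k) ^+ 2.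
  by apply: sumr_ge0 => k _; apply: sqr_ge0.
have sumsqE (e : R) : \sum_k (A i k + e * A j k) ^+ 2 =
    (A *m A^T) i i + 2 * e * (A *m A^T) i j + e ^+ 2 * (A *m A^T) j j.
  rewrite !mxE !mulr_sumr -!big_split /=; apply: eq_bigr => k _; rewrite !mxE; ring.
have := sumsq_ge0 1; have := sumsq_ge0 (-1); rewrite !sumsqE => minus_ge0 plus_ge0.
have -> : 2 * `|(A *m A^T) i j| = `|2 * (A *m A^T) i j| by rewrite normrM ger0_norm.
by rewrite ler_norml; apply/andP; split; nra.
Qed.

Lemma mxtrace_sqr_sym X : X^T = X -> \tr (X *m X) = \sum_i \sum_j X i j ^+ 2.
Proof.
move=> X_sym; apply: eq_bigr => i _; rewrite mxE; apply: eq_bigr => j _.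
by rewrite -{2}X_sym mxE expr2.
Qed.

Lemma schatten4_mul_diag_le X (e : 'rV[R]_n) (c : R) : 0 <= c ->
  (forall i, e 0 i ^+ 2 <= c ^+ 2) ->
  schatten4 (X *m diag_mx e) <= c * schatten4 X.
Proof.
move=> c_ge0 e_le; rewrite /schatten4 !sum_singvals_pow4.
set M := X^T *m X.
have M_sym : M^T = M by rewrite trmx_mul trmxK.
have -> : (X *m diag_mx e)^T *m (X *m diag_mx e) = diag_mx e *m M *m diag_mx e.
  by rewrite trmx_mul tr_diag_mx !mulmxA.
have DMD_sym : (diag_mx e *m M *m diag_mx e)^T = diag_mx e *m M *m diag_mx e.
  by rewrite !trmx_mul tr_diag_mx trmxK mulmxA.
have trace_le : \tr ((diag_mx e *m M *m diag_mx e) *m (diag_mx e *m M *m diag_mx e))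
    <= c ^+ 4 * \tr (M *m M).
  rewrite !mxtrace_sqr_sym // mulr_sumr; apply: ler_sum => i _.
  rewrite mulr_sumr; apply: ler_sum => j _.
  rewrite mul_mx_diag mul_diag_mx !mxE !exprMn (_ : 4 = 2 + 2)%N // exprD.
  rewrite mulrAC; apply: ler_wpM2r; first exact: sqr_ge0.
  by apply: ler_pM; rewrite ?sqr_ge0 ?e_le.
have tr_ge0 : 0 <= \tr (M *m M).
  rewrite mxtrace_sqr_sym //; apply: sumr_ge0 => i _.
  by apply: sumr_ge0 => j _; apply: sqr_ge0.
have sqrt_sqrt_c4 : Num.sqrt (Num.sqrt (c ^+ 4)) = c.
  rewrite (_ : 4 = 2 * 2)%N // exprM sqrtr_sqr ger0_norm ?sqr_ge0 //.
  by rewrite sqrtr_sqr ger0_norm.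
apply: (@le_trans _ _ (Num.sqrt (Num.sqrt (c ^+ 4 * \tr (M *m M))))).
  by rewrite ler_sqrt ?sqrtr_ge0 // ler_sqrt // mulr_ge0 // exprn_ge0.
by rewrite sqrtrM ?exprn_ge0 // sqrtrM ?sqrtr_ge0 // sqrt_sqrt_c4.
Qed.

End GramBounds.

Section UnitDiagonalGram.
Variables (R : realType) (n : nat) (A : 'M[R]_n).
Hypothesis gram_diag1 : forall i, (A *m A^T) i i = 1.

Lemma spec_norm_le_sqrt_dim : spec_norm A <= Num.sqrt n%:R.
Proof.
apply: spec_norm_le_sqrt => i.
have <- : \sum_j singvals A j ^+ 2 = n%:R.
  rewrite sum_singvals_sqr mxtrace_mulC /mxtrace (eq_bigr (fun=> 1)) => [|j _].
    by rewrite sumr_const card_ord.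
  exact: gram_diag1.
by rewrite (bigD1 i) //= lerDl; apply: sumr_ge0 => j _; apply: sqr_ge0.
Qed.

Lemma spec_norm_le_sqrt_sparsity (K : nat) :
  (forall i, (#|[set j | (A *m A^T) i j != 0%R]| <= K)%N) ->
  spec_norm A <= Num.sqrt K%:R.
Proof.
move=> supp_le; apply: spec_norm_le_sqrt => i.
have [->|s_neq0] := eqVneq (singvals A i) 0; first by rewrite expr0n ler0n.
have eigen : eigenvalue (A *m A^T) (singvals A i ^+ 2).
  by apply: eigenvalue_mulC; rewrite ?expf_neq0 ?singvals_sqr_eigenvalue.
rewrite -[_ ^+ 2]ger0_norm ?sqr_ge0 // -[K%:R]mulr1.
apply: eigenvalue_norm_le eigen _ _ => [j k|j].
  by have := gram_entry_norm_le A j k; rewrite !gram_diag1; lra.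
apply: leq_trans (supp_le j); apply: subset_leq_card; apply/subsetP => k.
by rewrite !inE gram_sym.
Qed.

End UnitDiagonalGram.

Lemma unitmx_diag (F : fieldType) n (g : 'rV[F]_n) :
  (forall i, g 0 i != 0) -> diag_mx g \in unitmx.
Proof. by move=> g_neq0; rewrite unitmxE det_diag unitfE; apply/prodf_neq0. Qed.

Lemma invmx_diag (F : fieldType) n (g : 'rV[F]_n) : (forall i, g 0 i != 0) ->
  invmx (diag_mx g) = diag_mx (\row_i (g 0 i)^-1).
Proof.
move=> g_neq0; have gV : diag_mx g *m diag_mx (\row_i (g 0 i)^-1) = 1%:M.
  rewrite mulmx_diag; apply/matrixP => a b; rewrite !mxE.
  by case: eqP => // ->; rewrite mulfV.
by rewrite -[LHS]mulmx1 -gV mulKmx ?unitmx_diag.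
Qed.

Lemma invmx_mul (R : comUnitRingType) n (A B : 'M[R]_n) :
  A \in unitmx -> B \in unitmx -> invmx (A *m B) = invmx B *m invmx A.
Proof.
move=> A_unit B_unit; have AB_unit : A *m B \in unitmx by rewrite unitmx_mul A_unit.
have BAAB : invmx B *m invmx A *m (A *m B) = 1%:M.
  by rewrite mulmxA mulmxKV // mulVmx.
by rewrite -[RHS](mulmxK AB_unit) BAAB mul1mx.
Qed.

Lemma gram_diag_scale (R : comNzRingType) n (g : 'rV[R]_n) (A : 'M[R]_n) a b :
  ((diag_mx g *m A) *m (diag_mx g *m A)^T) a b = g 0 a * (A *m A^T) a b * g 0 b.
Proof.
by rewrite trmx_mul tr_diag_mx mulmxA -(mulmxA _ A) mul_mx_diag mxE mul_diag_mx mxE.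
Qed.

Lemma gram_diag_gt0 (R : realType) n (A : 'M[R]_n) i :
  A \in unitmx -> 0 < (A *m A^T) i i.
Proof.
move=> A_unit; rewrite lt_def gram_diag_ge0 andbT; apply/eqP => gram_ii0.
have row0 : row i A = 0.
  have nonneg j : true -> 0 <= A i j * A^T j i by rewrite mxE -expr2 sqr_ge0.
  move: gram_ii0; rewrite mxE => /(psumr_eq0P nonneg) sq0.
  apply/rowP => k; apply/eqP; rewrite !mxE -sqrf_eq0 expr2.
  by have := sq0 k isT; rewrite mxE => ->.
have := congr1 (row i) (mulmxV A_unit).
rewrite row_mul row0 mul0mx => /rowP/(_ i).
by rewrite !mxE eqxx => /eqP; rewrite eq_sym oner_eq0.
Qed.

Section Equilibration.
Variables (R : realType) (n : nat) (L : 'M[R]_n).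
Hypothesis L_unit : L \in unitmx.
Local Notation C := (L *m L^T).
Local Notation d := (\row_i Num.sqrt (C i i)).
Local Notation B := (invmx (diag_mx d) *m L).

Lemma equilibration_scale_neq0 i : d 0 i != 0.
Proof. by rewrite mxE sqrtr_eq0 -ltNge gram_diag_gt0. Qed.

Lemma gram_equilibrated a b :
  (B *m B^T) a b = C a b / (Num.sqrt (C a a) * Num.sqrt (C b b)).
Proof.
rewrite invmx_diag ?gram_diag_scale; last exact: equilibration_scale_neq0.
by rewrite !mxE invfM mulrCA mulrA.
Qed.

Lemma gram_equilibrated_diag i : (B *m B^T) i i = 1.
Proof.
rewrite gram_equilibrated -expr2 sqr_sqrtr ?gram_diag_ge0 //.
by rewrite divff // gt_eqF ?gram_diag_gt0.
Qed.

Lemma gram_equilibrated_eq0 a b : ((B *m B^T) a b == 0) = (C a b == 0).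
Proof.
rewrite gram_equilibrated mulf_eq0 invr_eq0 mulf_eq0 !sqrtr_eq0.
by rewrite !leNgt !gram_diag_gt0 // orbF.
Qed.

Lemma kappa_equilibrated_le (g : 'rV[R]_n) : (forall i, g 0 i != 0) ->
  kappa B <= spec_norm B * kappa (invmx (diag_mx g) *m L).
Proof.
move=> g_neq0; set A := invmx (diag_mx g) *m L.
set e := \row_i ((g 0 i)^-1 * d 0 i).
have invB : invmx B = invmx A *m diag_mx e.
  rewrite !invmx_mul ?unitmx_inv ?unitmx_diag //; last exact: equilibration_scale_neq0.
  rewrite !invmxK -mulmxA mulmx_diag; congr (_ *m diag_mx _).
  by apply/rowP => i; rewrite !mxE mulrA mulfV ?mul1r.
have e_le i : e 0 i ^+ 2 <= spec_norm A ^+ 2.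
  apply: le_trans (gram_diag_le_spec_norm A i).
  have Cii := sqr_sqrtr (gram_diag_ge0 L i).
  rewrite /A invmx_diag // gram_diag_scale !mxE in Cii *.
  by rewrite exprMn Cii expr2 mulrAC.
rewrite /kappa; apply: ler_wpM2l; first exact: spec_norm_ge0.
have := schatten4_mul_diag_le (invmx A) (spec_norm_ge0 A) e_le.
by rewrite -invB.
Qed.

End Equilibration.

Theorem proposition2 (R : realType) (N : nat) (L Dopt : 'M[R]_N) :
  L \in unitmx ->
  inv_diag Dopt ->
  (forall G : 'M[R]_N, inv_diag G ->
     kappa (invmx Dopt *m L) <= kappa (invmx G *m L)) ->
  let C := L *m L^T in
  let D := diag_mx (\row_i Num.sqrt (C i i)) in
  kappa (invmx D *m L) <= Num.sqrt (N%:R) * kappa (invmx Dopt *m L) /\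
  (forall K : nat,
     (forall i : 'I_N, (#|[set j | C i j != 0%R]| <= K)%N) ->
     kappa (invmx D *m L) <= Num.sqrt (K%:R) * kappa (invmx Dopt *m L)).
Proof.
move=> L_unit [g [-> g_neq0]] _ C D.
have kappa_le := kappa_equilibrated_le L_unit g_neq0.
have gram_diag1 := gram_equilibrated_diag L_unit.
split=> [|K supp_le]; apply: (le_trans kappa_le).
  by apply: ler_wpM2r; [exact: kappa_ge0 | exact: spec_norm_le_sqrt_dim gram_diag1].
apply: ler_wpM2r; first exact: kappa_ge0.
apply: (spec_norm_le_sqrt_sparsity gram_diag1) => i.
by under eq_finset => j do rewrite gram_equilibrated_eq0 //; apply: supp_le.
Qed.
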